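(* Let $X$ be an ultrahomogeneous linear order, let $\Gamma$ be the group of all automorphisms of $X$ acting by application, and let $I$ be the ideal of nowhere dense subsets of $X$ (in the order topology). Then $\Gamma\curvearrowright X, I$ is a simple dynamical ideal.
   Context: A linear order is ultrahomogeneous if every order-isomorphism between finite subsets extends to an automorphism. For a group $\Gamma$ acting on $X$ and $a\subseteq X$, $\mathrm{pstab}(a)=\{\gamma\in\Gamma:\gamma\cdot x=x\ \forall x\in a\}$. A dynamical ideal $\Gamma\curvearrowright X, I$ (a $\Gamma$-invariant ideal containing all singletons) is simple if for all $a\subseteq b$ in $I$, the only normal subgroup of $\mathrm{pstab}(a)$ containing $\mathrm{pstab}(b)$ is $\mathrm{pstab}(a)$ itself. *)

From HB Require Import structures.
From mathcomp Require Import all_boot all_order.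
From mathcomp Require Import all_classical topology_structure order_topology.

Set Implicit Arguments.
Unset Strict Implicit.
Unset Printing Implicit Defensive.

Import Order.TTheory.
Local Open Scope classical_set_scope.
Local Open Scope order_scope.

Section Defs.
Context {disp : Order.disp_t} {X : orderType disp}.

Definition is_aut (g : X -> X) : Prop :=
  bijective g /\ {mono g : x y / x <= y}.

Definition Aut : set (X -> X) := [set g | is_aut g].

(** ultrahomogeneity: every order isomorphism between finite subsets
    (given as a strictly increasing map f on a finite set A, onto f @` A)
    extends to an automorphism *)
Definition ultrahomogeneous : Prop :=
  forall (A : set X) (f : X -> X), finite_set A ->
    (forall x y, A x -> A y -> x < y -> f x < f y) ->
    exists g, is_aut g /\ (forall x, A x -> g x = f x).

Definition nowhere_dense (A : set (order_topology X)) : Prop :=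
  interior (closure A) = set0.

Definition nowhere_dense_ideal : set (set X) :=
  [set A : set X | nowhere_dense (A : set (order_topology X))].

End Defs.

Section Dyn.
Context {X : Type}.

Definition pstab (Gam : set (X -> X)) (a : set X) : set (X -> X) :=
  [set g | Gam g /\ (forall x, a x -> g x = x)].

Definition normal_subgroup (N H : set (X -> X)) : Prop :=
  [/\ N `<=` H,
      N id,
      (forall g h, N g -> N h -> N (g \o h)),
      (forall g h, N g -> cancel g h -> cancel h g -> N h) &
      (forall g h n, H g -> cancel g h -> cancel h g -> N n ->
                     N (h \o n \o g))].

Definition is_ideal (I : set (set X)) : Prop :=
  [/\ I set0,
      (forall a b, I b -> a `<=` b -> I a) &
      (forall a b, I a -> I b -> I (a `|` b))].

Definition dynamical_ideal (Gam : set (X -> X)) (I : set (set X)) : Prop :=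
  [/\ is_ideal I,
      (forall g a, Gam g -> I a -> I (g @` a)) &
      (forall x, I [set x])].

Definition simple_dynamical_ideal (Gam : set (X -> X)) (I : set (set X)) : Prop :=
  dynamical_ideal Gam I /\
  forall a b, I a -> I b -> a `<=` b ->
    forall N, normal_subgroup N (pstab Gam a) -> pstab Gam b `<=` N ->
      N = pstab Gam a.

End Dyn.

(* Fix b nowhere dense, a normal subgroup N of pstab(a) containing pstab(b), and g
   in pstab(a).  Conjugation trick: if h is supported in disjoint open intervals
   ]x_i, y_i[ whose enlargements [c_i, d_i] miss a, ultrahomogeneity gives
   automorphisms of the [c_i, d_i] pushing each ]x_i, y_i[ into a gap of b; glued
   together they form k in pstab(a) with k h k^-1 in pstab(b), so h is in N.
   Every point moved by g lies in the convex hull of its g-orbit, which g moves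
   pointwise, so these hulls miss a.  Enumerate each orbit increasingly as (s_k)
   and cut it into blocks of 12 points.  Ultrahomogeneity yields h1 agreeing with g
   on every [s_12n, s_12n+3] and supported in the ]s_12n-2, s_12n+5[; then h1^-1 g
   is supported in the ]s_12n+3, s_12n+12[.  The enlargements [s_12n-3, s_12n+6]
   and [s_12n+2, s_12n+13] are shorter than a block, hence disjoint, so both
   factors are in N by the trick, and so is g = h1 (h1^-1 g). *)

From Stdlib Require Import ZArith Lia.
From mathcomp Require Import all_boot all_order.
From mathcomp Require Import all_classical topology_structure order_topology.
From mathcomp Require Import interval set_interval.

Set Implicit Arguments.
Unset Strict Implicit.
Unset Printing Implicit Defensive.
Import Order.TTheory.
Local Open Scope classical_set_scope.
Local Open Scope order_scope.

Section Automorphisms.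
Context {disp : Order.disp_t} {X : orderType disp}.
Implicit Types (f g : X -> X) (x y z u : X).

Lemma aut_le f : is_aut f -> forall x y, (f x <= f y) = (x <= y).
Proof. by case=> _ m x y; rewrite m. Qed.

Lemma aut_lt f : is_aut f -> forall x y, (f x < f y) = (x < y).
Proof. by move=> hf x y; rewrite !ltNge aut_le. Qed.

Lemma is_aut_of_lt f :
  (forall x y, x < y -> f x < f y) -> (forall y, exists x, f x = y) -> is_aut f.
Proof.
move=> hlt hsurj; have mf : {mono f : x y / x <= y} by exact: le_mono.
have [fi fiK] := choice hsurj; split=> //; exists fi => // x.
by apply/le_anti; rewrite -(mf (fi (f x)) x) -(mf x (fi (f x))) fiK lexx.
Qed.

Lemma aut_id : is_aut (@id X).
Proof. by apply: is_aut_of_lt => // y; exists y. Qed.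

Lemma aut_comp f g : is_aut f -> is_aut g -> is_aut (f \o g).
Proof.
move=> hf hg; apply: is_aut_of_lt => [x y xy|y] /=; first by rewrite !aut_lt.
case: hf hg => [[fi _ fK]] _ [[gi _ gK]] _.
by exists (gi (fi y)); rewrite /= gK fK.
Qed.

Lemma aut_cancel f fi : is_aut f -> cancel f fi -> cancel fi f -> is_aut fi.
Proof.
move=> hf fK fiK; apply: is_aut_of_lt => [x y xy|y]; last by exists (f y).
by rewrite -(aut_lt hf) !fiK.
Qed.

Lemma aut_inverse f : is_aut f ->
  exists fi, [/\ is_aut fi, cancel f fi & cancel fi f].
Proof.
move=> hf; have [[fi fK fiK] _] := hf.
by exists fi; split=> //; exact: aut_cancel fK fiK.
Qed.

Lemma aut_splice f1 f2 u : is_aut f1 -> is_aut f2 -> f1 u = f2 u ->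
  is_aut (fun z => if z <= u then f1 z else f2 z).
Proof.
move=> h1 h2 e; apply: is_aut_of_lt => [x y xy|y].
  case: ifP => xu; case: ifP => yu; rewrite ?aut_lt //.
  - rewrite -(aut_le h1) e in xu; apply: le_lt_trans xu _.
    by rewrite aut_lt // ltNge yu.
  - by move: (le_trans (ltW xy) yu); rewrite xu.
have [g1 [_ _ g1K]] := aut_inverse h1; have [g2 [_ _ g2K]] := aut_inverse h2.
case: (leP y (f1 u)) => yu.
  by exists (g1 y); rewrite -(aut_le h1) g1K yu.
exists (g2 y); have -> : (g2 y <= u) = false by rewrite -(aut_le h2) g2K -e leNgt yu.
by rewrite g2K.
Qed.

Definition disjoint_segments (I : Type) (P : set I) (lo hi : I -> X) :=
  forall i j z, P i -> P j -> lo i <= z <= hi i -> lo j <= z <= hi j -> i = j.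

Section Piecewise.
Variables (I : Type) (P : set I) (lo hi : I -> X) (phi : I -> X -> X).
Hypothesis disjP : disjoint_segments P lo hi.
Hypothesis phiP : forall i, P i ->
  [/\ is_aut (phi i), phi i (lo i) = lo i & phi i (hi i) = hi i].

Definition in_segments z := exists i, P i /\ lo i <= z <= hi i.

Definition piecewise z : X :=
  if pselect (in_segments z) is left ex then phi (projT1 (cid ex)) z else z.

Lemma piecewise_in i z : P i -> lo i <= z <= hi i -> piecewise z = phi i z.
Proof.
move=> Pi zi; rewrite /piecewise; case: pselect => [ex|]; last by case; exists i.
by case: (cid ex) => j [Pj zj] /=; rewrite (disjP Pj Pi zj zi).
Qed.

Lemma piecewise_out z : ~ in_segments z -> piecewise z = z.
Proof. by rewrite /piecewise; case: pselect. Qed.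

Lemma piecewise_fix z : (forall i, P i -> ~ (lo i < z < hi i)) -> piecewise z = z.
Proof.
move=> zout; have [[i [Pi zi]]|] := pselect (in_segments z); last exact: piecewise_out.
have [_ fixlo fixhi] := phiP Pi; rewrite (piecewise_in Pi zi).
case/andP: zi; rewrite !le_eqVlt => /orP[/eqP<-//|loz] /orP[/eqP->//|zhi].
by case: (zout i Pi); rewrite loz zhi.
Qed.

Lemma phi_segment i z : P i -> (lo i <= phi i z <= hi i) = (lo i <= z <= hi i).
Proof. by move=> /phiP[hphi fixlo fixhi]; rewrite -{1}fixlo -{1}fixhi !aut_le. Qed.

Lemma piecewise_segment i z : P i -> lo i <= z <= hi i -> lo i <= piecewise z <= hi i.
Proof. by move=> Pi zi; rewrite (piecewise_in Pi zi) phi_segment. Qed.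

Lemma piecewise_gt i y : P i -> lo i <= hi i -> hi i < y -> hi i < piecewise y.
Proof.
move=> Pi lohi hiy; have [[j [Pj yj]]|yout] := pselect (in_segments y); last first.
  by rewrite piecewise_out.
have /andP[+ _] := piecewise_segment Pj yj; apply: lt_le_trans.
rewrite ltNge; apply/negP => lojhi; case/andP: (yj) => _ yhij.
have hij : lo j <= hi i <= hi j by rewrite lojhi (le_trans (ltW hiy)).
have hii : lo i <= hi i <= hi i by rewrite lohi lexx.
by move: hiy; rewrite (disjP Pi Pj hii hij) ltNge yhij.
Qed.

Lemma piecewise_aut : is_aut piecewise.
Proof.
apply: is_aut_of_lt => [x y xy|y]; last first.
  have [[j [Pj yj]]|yout] := pselect (in_segments y); last first.
    by exists y; rewrite piecewise_out.
  have [hphi _ _] := phiP Pj; have [psi [_ _ psiK]] := aut_inverse hphi.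
  have psiy : lo j <= psi y <= hi j by rewrite -(phi_segment _ Pj) psiK.
  by exists (psi y); rewrite (piecewise_in Pj psiy) psiK.
have [[i [Pi xi]]|xout] := pselect (in_segments x).
  have /andP[loix xhii] := xi.
  have [yhi|hiy] := leP y (hi i).
    have yi : lo i <= y <= hi i by rewrite yhi (le_trans loix (ltW xy)).
    have [hphi _ _] := phiP Pi.
    by rewrite (piecewise_in Pi xi) (piecewise_in Pi yi) aut_lt.
  have /andP[_ gxhi] := piecewise_segment Pi xi.
  exact: le_lt_trans gxhi (piecewise_gt Pi (le_trans loix xhii) hiy).
rewrite (piecewise_out xout).
have [[j [Pj yj]]|yout] := pselect (in_segments y); last by rewrite piecewise_out.
have /andP[lojgy _] := piecewise_segment Pj yj; apply: lt_le_trans lojgy.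
rewrite ltNge; apply/negP => lojx; apply: xout; exists j; split=> //.
by rewrite lojx (le_trans (ltW xy)) //; case/andP: yj.
Qed.

End Piecewise.

End Automorphisms.

Section Homogeneity.
Context {disp : Order.disp_t} {X : orderType disp}.
Hypotheses (uh : @ultrahomogeneous disp X) (two : exists x y : X, x <> y).
Implicit Types (g : X -> X) (x y z p q s t u v : X).

Lemma aut_map_point p p' : exists al, is_aut al /\ al p = p'.
Proof.
have incr x y : [set p] x -> [set p] y -> x < y -> (fun=> p') x < (fun=> p') y.
  by move=> -> ->; rewrite ltxx.
have [al [hal alp]] := uh (finite_set1 p) incr.
by exists al; rewrite alp.
Qed.

Lemma aut_map_pair p q p' q' : p < q -> p' < q' ->
  exists al, [/\ is_aut al, al p = p' & al q = q'].
Proof.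
move=> pq pq'; pose f z := if z == p then p' else q'.
have incr x y : [set p; q] x -> [set p; q] y -> x < y -> f x < f y.
  move=> [->|->] [->|->]; rewrite /f ?ltxx ?eqxx ?(gt_eqF pq) // => qp.
  by move: (lt_trans qp pq); rewrite ltxx.
have [al [hal alf]] := uh (finite_set2 p q) incr.
by exists al; rewrite !alf /f ?eqxx ?(gt_eqF pq); [|right|left].
Qed.

Lemma exists_lt_pair : exists x y, x < y.
Proof.
case: two => x [y /eqP]; rewrite neq_lt => /orP[xy|yx]; first by exists x, y.
by exists y, x.
Qed.

Lemma exists_above x : exists y, x < y.
Proof.
have [p [q pq]] := exists_lt_pair; have [al [hal alp]] := aut_map_point p x.
by exists (al q); rewrite -alp aut_lt.
Qed.

Lemma exists_below x : exists y, y < x.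
Proof.
have [p [q pq]] := exists_lt_pair; have [al [hal alq]] := aut_map_point q x.
by exists (al p); rewrite -alq aut_lt.
Qed.

Lemma exists_between x y : x < y -> exists z, x < z < y.
Proof.
move=> xy; have [w yw] := exists_above y.
have [al [hal alx aly]] := aut_map_pair xy (lt_trans xy yw).
have [ai [hai alK _]] := aut_inverse hal.
exists (ai y); apply/andP; split.
  by rewrite -{1}(alK x) alx aut_lt.
by rewrite -{2}(alK y) aly aut_lt.
Qed.

(* Splice id, a map sending (p, s) to (p, g s), g, and a map sending (t, q) to
   (g t, q): consecutive pieces agree at p, s, t and q. *)
Lemma aut_localize g p s t q : is_aut g -> p < s -> s <= t -> t < q ->
  p < g s -> g t < q ->
  exists phi, [/\ is_aut phi, phi p = p, phi q = q &
                  forall z, s <= z <= t -> phi z = g z].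
Proof.
move=> hg ps st tq pgs gtq.
have [al [hal alp als]] := aut_map_pair ps pgs.
have [be [hbe bet beq]] := aut_map_pair tq gtq.
pose f1 z := if z <= p then z else al z.
have h1 : is_aut f1 by apply: aut_splice aut_id hal _; rewrite alp.
have f1s : f1 s = g s by rewrite /f1 leNgt ps.
pose f2 z := if z <= s then f1 z else g z.
have h2 : is_aut f2 by apply: aut_splice h1 hg f1s.
have f2t : f2 t = be t.
  by rewrite /f2 bet; case: ifP => // ts; have -> : t = s by apply/le_anti; rewrite ts.
pose f3 z := if z <= t then f2 z else be z.
have h3 : is_aut f3 by apply: aut_splice h2 hbe f2t.
have f3q : f3 q = q by rewrite /f3 leNgt tq.
pose f4 z := if z <= q then f3 z else z.
have h4 : is_aut f4 by apply: aut_splice h3 aut_id f3q.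
have pt : p < t := lt_le_trans ps st.
exists f4; split=> //.
- by rewrite /f4 /f3 /f2 /f1 (ltW (lt_trans pt tq)) (ltW pt) (ltW ps) lexx.
- by rewrite /f4 lexx.
- move=> z /andP[sz zt]; rewrite /f4 /f3 /f2 (ltW (le_lt_trans zt tq)) zt.
  by case: ifP => // zs; have -> : z = s by apply/le_anti; rewrite zs sz.
Qed.

Lemma aut_localize_pair c x y d u v : c < x -> x < y -> y < d ->
  c < u -> u < v -> v < d ->
  exists ka, [/\ is_aut ka, ka c = c, ka d = d, ka x = u & ka y = v].
Proof.
move=> cx xy yd cu uv vd; have [al [hal alx aly]] := aut_map_pair xy uv.
have calx : c < al x by rewrite alx.
have alyd : al y < d by rewrite aly.
have [ka [hka kac kad kaal]] := aut_localize hal cx (ltW xy) yd calx alyd.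
by exists ka; split; rewrite // kaal ?lexx ?(ltW xy).
Qed.

End Homogeneity.

Section NowhereDense.
Context {disp : Order.disp_t} {X : orderType disp}.
Hypotheses (above : forall x : X, exists y, x < y)
           (below : forall x : X, exists y, y < x)
           (between : forall x y : X, x < y -> exists z, x < z < y).
Local Notation oT := (order_topology X).
Implicit Types (A B : set X) (p q w z : X).

Definition interval_sparse A :=
  forall p q, p < q -> exists p' q', p' < q' /\ `]p', q'[ `<=` `]p, q[ `\` A.

Lemma nbhs_itvP w B :
  nbhs (w : oT) B <-> exists p q, [/\ p < w, w < q & `]p, q[ `<=` B].
Proof.
split=> [|[p [q [pw wq pqB]]]]; last first.
  apply: (@filterS _ _ _ `]p, q[) => //; apply: open_nbhs_nbhs.
  split; first exact: (@itv_open _ oT).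
  by rewrite /= in_itv /= pw wq.
rewrite order_nbhs_itv => -[i [openi wi] iB]; move: openi wi iB.
case: i => [[[]l|[]] [[]r|[]]] //= _; rewrite in_itv /= ?andbT => wi iB.
- by case/andP: wi => lw wr; exists l, r; split; [exact: lw|exact: wr|].
- have [r wr] := above w; exists l, r; split=> [|//|z]; first exact: wi.
  rewrite /= in_itv /= => /andP[lz _]; apply: iB.
  by rewrite /= in_itv /= andbT; exact: lz.
- have [l lw] := below w; exists l, r; split=> [//||z]; first exact: wi.
  rewrite /= in_itv /= => /andP[_ zr]; apply: iB.
  by rewrite /= in_itv; exact: zr.
- have [l lw] := below w; have [r wr] := above w; exists l, r; split=> // z _.
  exact: iB.
Qed.

Lemma nowhere_denseP A : nowhere_dense (A : set oT) <-> interval_sparse A.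
Proof.
split=> [ndA p q pq|sA].
  have [w [wpq wA]] : exists w, `]p, q[%classic w /\ ~ closure (A : set oT) w.
    apply: contrapT => pq_closure; have [z zpq] := between pq.
    suff : (closure (A : set oT))° z by rewrite ndA.
    apply/nbhs_itvP; exists p, q; split; [by case/andP: zpq.. |].
    move=> y ypq; apply: contrapT => yA; apply: pq_closure; by exists y.
  have [B [Bw AB]] : exists B, nbhs (w : oT) B /\ ~ (A `&` B !=set0).
    apply: contrapT => hB; apply: wA => B Bw.
    by apply: contrapT => AB; apply: hB; exists B.
  have : nbhs (w : oT) (B `&` `]p, q[%classic).
    apply: filterI => //; apply/nbhs_itvP; exists p, q.
    by move: wpq; rewrite /= in_itv /= => /andP[pw wq]; split.
  case/nbhs_itvP => p' [q' [p'w wq' sub]].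
  exists p', q'; split; first exact: lt_trans wq'.
  by move=> z /sub [Bz zpq]; split=> // Az; apply: AB; exists z.
apply/seteqP; split=> // w /nbhs_itvP [p [q [pw wq pq_closure]]].
have [p' [q' [pq' sub]]] := sA p q (lt_trans pw wq).
have [z zpq'] := between pq'.
have zpq'' : `]p', q'[%classic z by rewrite /= in_itv /= zpq'.
have [zpq _] := sub z zpq''.
have : nbhs (z : oT) `]p', q'[%classic.
  by apply/nbhs_itvP; exists p', q'; case/andP: zpq' => pz zq; split.
by case/(pq_closure z zpq) => y [Ay /sub [_ /(_ Ay)]].
Qed.

Lemma interval_sparse0 : interval_sparse set0.
Proof. by move=> p q pq; exists p, q; split=> // z zpq; split. Qed.

Lemma interval_sparseS A B : interval_sparse B -> A `<=` B -> interval_sparse A.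
Proof.
move=> sB AB p q /sB [p' [q' [pq' sub]]]; exists p', q'; split=> // z /sub [zpq Bz].
by split=> // /AB.
Qed.

Lemma interval_sparseU A B :
  interval_sparse A -> interval_sparse B -> interval_sparse (A `|` B).
Proof.
move=> sA sB p q /sA [p' [q' [/sB [p'' [q'' [pq'' sub']]] sub]]].
exists p'', q''; split=> // z /sub' [/sub [zpq Az] Bz].
by split=> // -[].
Qed.

Lemma interval_sparse_image g A :
  is_aut g -> interval_sparse A -> interval_sparse (g @` A).
Proof.
move=> hg sA p q pq; have [gi [hgi gK giK]] := aut_inverse hg.
have [p' [q' [pq' sub]]] : exists p' q', p' < q' /\ `]p', q'[ `<=` `]gi p, gi q[ `\` A.
  by apply: sA; rewrite aut_lt.
exists (g p'), (g q'); split; first by rewrite aut_lt.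
move=> z; rewrite -[z]giK /= !in_itv /= !aut_lt // => zpq'.
have [] := sub (gi z); first by rewrite /= in_itv.
rewrite /= in_itv /= => zpq Az; split; first by rewrite -[p]giK -[q]giK !(aut_lt hg).
by case=> y Ay /(can_inj gK) yz; apply: Az; rewrite -yz.
Qed.

Lemma interval_sparse1 x : interval_sparse [set x].
Proof.
move=> p q pq; have [xq|qx] := ltP x q.
  exists (Order.max p x), q; split; first by rewrite gt_max pq.
  move=> z; rewrite /= !in_itv /= gt_max => /andP[/andP[pz xz] zq].
  by split; [rewrite pz zq | move=> zx; move: xz; rewrite zx ltxx].
exists p, q; split=> // z zpq; split=> // zx; move: zpq.
by rewrite /= in_itv /= zx => /andP[_]; rewrite ltNge qx.
Qed.

Lemma dynamical_nowhere_dense : dynamical_ideal Aut (@nowhere_dense_ideal _ X).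
Proof.
split; [split|..] => [|A B|A B|g A|x]; rewrite /nowhere_dense_ideal /= ?nowhere_denseP.
- exact: interval_sparse0.
- exact: interval_sparseS.
- exact: interval_sparseU.
- exact: interval_sparse_image.
- exact: interval_sparse1.
Qed.

End NowhereDense.

Section ConjugationTrick.
Context {disp : Order.disp_t} {X : orderType disp}.
Hypotheses (uh : @ultrahomogeneous disp X) (two : exists x y : X, x <> y).
Variables (a b : set X) (N : set (X -> X)).
Hypotheses (sparse_b : interval_sparse b)
           (normalN : normal_subgroup N (pstab Aut a))
           (pstab_bN : pstab Aut b `<=` N).

Lemma block_supported_in_normal (I : Type) (P : set I) (c x y d : I -> X)
    (h : X -> X) :
  (forall i, P i -> [/\ c i < x i, x i < y i & y i < d i]) ->
  disjoint_segments P c d ->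
  (forall i, P i -> forall z, c i <= z <= d i -> ~ a z) ->
  is_aut h -> (forall z, (forall i, P i -> ~ (x i < z < y i)) -> h z = z) ->
  N h.
Proof.
move=> cxyd disjP free_a hh hfix.
have [_ _ _ _ Nconj] := normalN.
have pieces i : exists ka, P i -> [/\ is_aut ka, ka (c i) = c i, ka (d i) = d i &
    forall z, x i < z < y i -> ~ b (ka z)].
  have [Pi|nPi] := pselect (P i); last by exists id => /nPi.
  have [cx xy yd] := cxyd i Pi.
  have [p' [q' [pq' gap]]] := sparse_b (lt_trans cx (lt_trans xy yd)).
  have [u /andP[pu uq]] := exists_between uh two pq'.
  have [v /andP[uv vq]] := exists_between uh two uq.
  have gap_b z : p' < z < q' -> c i < z < d i /\ ~ b z.
    move=> zpq; have /gap[czd nbz] : `]p', q'[%classic z by rewrite /= in_itv.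
    by split=> //; move: czd; rewrite /= in_itv.
  have [/andP[cu _] _] : c i < u < d i /\ ~ b u.
    by apply: gap_b; rewrite pu (lt_trans uv vq).
  have [/andP[_ vd] _] : c i < v < d i /\ ~ b v.
    by apply: gap_b; rewrite vq (lt_trans pu uv).
  have [ka [hka kac kad kax kay]] := aut_localize_pair uh cx xy yd cu uv vd.
  exists ka => _; split=> // z /andP[xz zy]; apply: (proj2 (gap_b _ _)).
  by rewrite (lt_trans pu) -?kax ?aut_lt // (lt_trans _ vq) // -kay aut_lt.
have [K Kpieces] := choice pieces.
pose k := piecewise P c d K.
have hk : is_aut k.
  by apply: piecewise_aut => // i /Kpieces[].
have [ki [hki kK kiK]] := aut_inverse hk.
have k_a : pstab Aut a k.
  split=> // z az; apply: piecewise_out => -[i [Pi zi]].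
  exact: free_a Pi z zi az.
suff Nkhk : N (k \o h \o ki).
  by have := Nconj _ _ _ k_a kK kiK Nkhk; congr N; apply: funext => z /=; rewrite !kK.
apply: pstab_bN; split; first exact: aut_comp (aut_comp hk hh) hki.
move=> w bw /=; suff -> : h (ki w) = ki w by rewrite kiK.
apply: hfix => i Pi xwy; have [cx _ yd] := cxyd i Pi.
have wi : c i <= ki w <= d i.
  by case/andP: xwy => xw wy; rewrite (ltW (lt_trans cx xw)) (ltW (lt_trans wy yd)).
have [_ _ _ kb] := Kpieces i Pi.
by apply: kb xwy _; rewrite -(piecewise_in K disjP Pi wi) -/k kiK.
Qed.

End ConjugationTrick.

Section Iterates.
Context {disp : Order.disp_t} {X : orderType disp}.
Variables (f fi : X -> X).
Hypotheses (hf : is_aut f) (fK : cancel f fi) (fiK : cancel fi f).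
Implicit Types (r w z : X) (k l n : Z).

Definition iterz n z : X :=
  if (0 <=? n)%Z then iter (Z.to_nat n) f z else iter (Z.to_nat (- n)) fi z.

Lemma iterz_succ n z : iterz (n + 1) z = f (iterz n z).
Proof.
rewrite /iterz; case: (Z.leb_spec0 0 n) => n0.
  have -> : (0 <=? n + 1)%Z = true by apply/Z.leb_le; lia.
  by have -> : Z.to_nat (n + 1) = (Z.to_nat n).+1 by lia.
case: (Z.leb_spec0 0 (n + 1)) => n1.
  have -> : Z.to_nat (n + 1) = 0%nat by lia.
  have -> : Z.to_nat (- n) = 1%nat by lia.
  by rewrite /= fiK.
have -> : Z.to_nat (- n) = (Z.to_nat (- (n + 1))).+1 by lia.
by rewrite iterS fiK.
Qed.

Lemma iterz_pred n z : iterz (n - 1) z = fi (iterz n z).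
Proof. by rewrite -[in iterz n z](Z.sub_add 1 n) iterz_succ fK. Qed.

Lemma iterz1 z : iterz 1 z = f z.
Proof. exact: iterz_succ 0%Z z. Qed.

Lemma iterz_lt n : {homo iterz n : x y / x < y}.
Proof.
have hfi := aut_cancel hf fK fiK.
induction n using Z.peano_ind => x y xy //.
- by rewrite -Z.add_1_r !iterz_succ (aut_lt hf) IHn.
- by rewrite -Z.sub_1_r !iterz_pred (aut_lt hfi) IHn.
Qed.

Lemma iterz_le n : {homo iterz n : x y / x <= y}.
Proof. by move=> x y; rewrite le_eqVlt => /orP[/eqP->//|/(iterz_lt n)/ltW]. Qed.

Lemma iterzD m n z : iterz (m + n) z = iterz m (iterz n z).
Proof.
induction m using Z.peano_ind; first by rewrite Z.add_0_l.
- by rewrite -Z.add_1_r (_ : m + 1 + n = m + n + 1)%Z ?iterz_succ ?IHm //; lia.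
- by rewrite -Z.sub_1_r (_ : m - 1 + n = m + n - 1)%Z ?iterz_pred ?IHm //; lia.
Qed.

Lemma iterzNK n z : iterz (- n) (iterz n z) = z.
Proof. by rewrite -iterzD Z.add_opp_diag_l. Qed.

Lemma iterz_fixed z : f z = z -> forall n, iterz n z = z.
Proof.
move=> fz; have fiz : fi z = z by rewrite -{1}fz fK.
induction n using Z.peano_ind => //.
- by rewrite -Z.add_1_r iterz_succ IHn.
- by rewrite -Z.sub_1_r iterz_pred IHn.
Qed.

Definition orbit_hull z : set X :=
  [set w | exists k l, iterz k z <= w <= iterz l z].

Lemma orbit_hull_refl z : orbit_hull z z.
Proof. by exists 0%Z, 0%Z; rewrite lexx. Qed.

Lemma orbit_hull_sym z w : orbit_hull z w -> orbit_hull w z.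
Proof.
case=> k [l /andP[kw wl]]; exists (- l)%Z, (- k)%Z.
by rewrite -{1}(iterzNK l z) -{2}(iterzNK k z) !iterz_le.
Qed.

Lemma orbit_hull_sub z w : orbit_hull z w -> orbit_hull w `<=` orbit_hull z.
Proof.
case=> k [l /andP[kw wl]] v [i [j /andP[iv vj]]].
exists (i + k)%Z, (j + l)%Z; rewrite !iterzD.
by rewrite (le_trans (iterz_le i kw) iv) (le_trans vj (iterz_le j wl)).
Qed.

Lemma orbit_hull_eq z w : orbit_hull z w -> orbit_hull w = orbit_hull z.
Proof.
move=> zw; apply/seteqP; split; first exact: orbit_hull_sub.
exact/orbit_hull_sub/orbit_hull_sym.
Qed.

Lemma orbit_hull_fixed z w : f z = z -> orbit_hull z w -> w = z.
Proof. by move=> fz [k [l]]; rewrite !iterz_fixed // andbC => /le_anti. Qed.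

Lemma orbit_hull_moved z w : f z <> z -> orbit_hull z w -> f w <> w.
Proof.
by move=> fz zw fw; apply: fz; rewrite (orbit_hull_fixed fw (orbit_hull_sym zw)).
Qed.

(* Increasing in k as soon as f r <> r. *)
Definition orbit_seq r k : X := if r < f r then iterz k r else iterz (- k) r.

Lemma orbit_seq_shift r : f r <> r -> exists e : Z, (e = 1 \/ e = -1)%Z /\
  forall k, f (orbit_seq r k) = orbit_seq r (k + e).
Proof.
move=> fr; rewrite /orbit_seq; case: (r < f r).
  by exists 1%Z; split=> [|k]; [left|rewrite iterz_succ].
exists (-1)%Z; split=> [|k]; first by right.
by rewrite (_ : - (k + -1) = - k + 1)%Z ?iterz_succ //; lia.
Qed.

Lemma orbit_seq_succ r k : f r <> r -> orbit_seq r k < orbit_seq r (k + 1).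
Proof.
move=> fr; rewrite /orbit_seq; case: ifP => rfr.
  by rewrite iterzD iterz1; apply: iterz_lt.
have frr : f r < r by rewrite lt_neqAle (introN eqP fr) leNgt rfr.
rewrite (_ : - (k + 1) = - k + -1)%Z; last lia.
rewrite iterzD; apply: iterz_lt.
have -> : iterz (-1) r = fi r by exact: iterz_pred 0%Z r.
by rewrite -(aut_lt hf) fiK.
Qed.

Lemma orbit_seq_lt r k l : f r <> r -> (k < l)%Z -> orbit_seq r k < orbit_seq r l.
Proof.
move=> fr kl; have -> : l = (k + Z.of_nat (Z.to_nat (l - k - 1)) + 1)%Z by lia.
elim: (Z.to_nat _) => [|n IH]; first by rewrite Z.add_0_r orbit_seq_succ.
apply: lt_trans IH _; rewrite Nat2Z.inj_succ -Z.add_1_r Z.add_assoc.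
exact: orbit_seq_succ.
Qed.

Lemma orbit_seq_le r k l : f r <> r -> (k <= l)%Z -> orbit_seq r k <= orbit_seq r l.
Proof.
move=> fr kl; case: (Z.eq_dec k l) => [->//|kl'].
by apply/ltW/orbit_seq_lt => //; lia.
Qed.

Lemma orbit_hull_seq r k l w :
  orbit_seq r k <= w <= orbit_seq r l -> orbit_hull r w.
Proof.
by rewrite /orbit_seq; case: (r < f r) => kwl; [exists k, l|exists (- k)%Z, (- l)%Z].
Qed.

Lemma orbit_seq_hull r w : orbit_hull r w ->
  exists k l, orbit_seq r k <= w <= orbit_seq r l.
Proof.
case=> k [l kwl]; rewrite /orbit_seq; case: (r < f r); first by exists k, l.
by exists (- k)%Z, (- l)%Z; rewrite !Z.opp_involutive.
Qed.

Lemma orbit_seq_locate r w : f r <> r -> orbit_hull r w ->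
  exists k, orbit_seq r k <= w <= orbit_seq r (k + 1).
Proof.
move=> fr /orbit_seq_hull [k [l /andP[kw wl]]].
have kl : (k <= l)%Z.
  case: (Z.le_gt_cases k l) => // lk.
  by move: (orbit_seq_lt fr lk); rewrite ltNge (le_trans kw wl).
rewrite (_ : l = k + Z.of_nat (Z.to_nat (l - k)))%Z in wl; last lia.
move: (Z.to_nat _) wl => n wl; elim: n k kw wl {kl} => [|n IH] k kw wl.
  by exists k; rewrite kw (le_trans _ (ltW (orbit_seq_succ k fr))) // -(Z.add_0_r k).
case: (leP w (orbit_seq r (k + 1))) => wk1; first by exists k; rewrite kw wk1.
apply: (IH (k + 1)%Z (ltW wk1)).
by rewrite (_ : k + 1 + Z.of_nat n = k + Z.of_nat n.+1)%Z //; lia.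
Qed.

Lemma orbit_seq_locate_mod (m : Z) r w : (0 < m)%Z -> f r <> r -> orbit_hull r w ->
  exists n t, (0 <= t < m)%Z /\
    orbit_seq r (m * n + t) <= w <= orbit_seq r (m * n + (t + 1)).
Proof.
move=> m0 fr /(orbit_seq_locate fr) [k hk].
exists (k / m)%Z, (k mod m)%Z; split; first exact: Z.mod_pos_bound.
by rewrite Z.add_assoc -Z_div_mod_eq_full.
Qed.

End Iterates.

Section Decomposition.
Context {disp : Order.disp_t} {X : orderType disp}.
Hypotheses (uh : @ultrahomogeneous disp X) (two : exists x y : X, x <> y).
Variables (a b : set X) (N : set (X -> X)).
Hypotheses (sparse_b : interval_sparse b)
           (normalN : normal_subgroup N (pstab Aut a))
           (pstab_bN : pstab Aut b `<=` N).
Variables (g gi : X -> X).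
Hypotheses (hg : is_aut g) (gK : cancel g gi) (giK : cancel gi g)
           (g_a : forall z, a z -> g z = z).
Local Notation hull := (orbit_hull g gi).

(* A canonical point of each orbit hull: every moved point lies in the hull of
   exactly one orbit_root. *)
Definition orbit_rep r : X := xget r (hull r).

Definition orbit_root r := g r <> r /\ orbit_rep r = r.

Lemma orbit_repE r w : hull r w -> orbit_rep w = orbit_rep r.
Proof.
move=> rw; rewrite /orbit_rep (orbit_hull_eq hg gK giK rw) /xget.
case: pselect => // -[]; exists r; apply/asboolP; exact: orbit_hull_refl.
Qed.

Lemma moved_orbit_root w : g w <> w -> exists r, orbit_root r /\ hull r w.
Proof.
move=> gw; have wr : hull w (orbit_rep w) := xgetI w (orbit_hull_refl g gi w).
exists (orbit_rep w); split; last exact: orbit_hull_sym.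
by split; [exact: orbit_hull_moved gw wr|rewrite (orbit_repE wr)].
Qed.

Lemma orbit_root_unique r r' w :
  orbit_root r -> orbit_root r' -> hull r w -> hull r' w -> r = r'.
Proof.
by move=> [_ rr] [_ rr'] /orbit_repE rw /orbit_repE r'w; rewrite -rr -rr' -rw.
Qed.

Definition block_index : set (X * Z) := [set i | orbit_root i.1].

Definition blk (i : X * Z) (k : Z) : X := orbit_seq g gi i.1 (12 * i.2 + k).

Lemma blk_lt i k l : block_index i -> (k < l)%Z -> blk i k < blk i l.
Proof. by move=> [gi1 _] kl; apply: orbit_seq_lt => //; lia. Qed.

Lemma blk_le i k l : block_index i -> (k <= l)%Z -> blk i k <= blk i l.
Proof. by move=> [gi1 _] kl; apply: orbit_seq_le => //; lia. Qed.

Lemma blk_moved i k l z : block_index i -> blk i k <= z <= blk i l -> g z <> z.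
Proof. by move=> [gi1 _] /orbit_hull_seq; apply: orbit_hull_moved. Qed.

Lemma blk_not_a i k l z : block_index i -> blk i k <= z <= blk i l -> ~ a z.
Proof. by move=> Pi zi /g_a; apply: blk_moved Pi zi. Qed.

Lemma blk_disjoint (lo hi : Z) : (hi - lo < 12)%Z ->
  disjoint_segments block_index (blk^~ lo) (blk^~ hi).
Proof.
move=> width [r n] [r' n'] z Pi Pj zi zj.
have /= rr' := orbit_root_unique Pi Pj (orbit_hull_seq zi) (orbit_hull_seq zj).
subst r'; suff -> : n = n' by [].
have apart m m' : (m < m')%Z -> blk (r, m) lo <= z <= blk (r, m) hi ->
    blk (r, m') lo <= z <= blk (r, m') hi -> False.
  move=> mm' /andP[_ zhi] /andP[zlo _].
  have gr : g r <> r by case: Pi.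
  have : blk (r, m) hi < blk (r, m') lo.
    by apply: (orbit_seq_lt hg gK giK gr); change (12 * m + hi < 12 * m' + lo)%Z; lia.
  by move=> /(le_lt_trans zhi)/lt_le_trans/(_ zlo); rewrite ltxx.
case: (Z.lt_total n n') => [nn'|[//|n'n]]; [case: (apart _ _ nn' zi zj)|].
by case: (apart _ _ n'n zj zi).
Qed.

Lemma localized_piece i : block_index i ->
  exists phi, [/\ is_aut phi, phi (blk i (-2)) = blk i (-2),
                  phi (blk i 5) = blk i 5 &
                  forall z, blk i 0 <= z <= blk i 3 -> phi z = g z].
Proof.
move=> Pi; have [e [e1 gshift]] := orbit_seq_shift giK Pi.1.
have [gi1 _] := Pi.
apply: (aut_localize uh hg); rewrite ?blk_lt ?blk_le //.
- by rewrite /blk gshift; apply: orbit_seq_lt => //; case: e1 => ->; lia.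
- by rewrite /blk gshift; apply: orbit_seq_lt => //; case: e1 => ->; lia.
Qed.

Lemma first_factor_in_normal : exists h, [/\ is_aut h, N h,
  forall i z, block_index i -> blk i 0 <= z <= blk i 3 -> h z = g z &
  forall z, g z = z -> h z = z].
Proof.
have pieces i : exists phi, block_index i ->
    [/\ is_aut phi, phi (blk i (-2)) = blk i (-2), phi (blk i 5) = blk i 5 &
        forall z, blk i 0 <= z <= blk i 3 -> phi z = g z].
  have [Pi|nPi] := pselect (block_index i); last by exists id => /nPi.
  by have [phi hphi] := localized_piece Pi; exists phi.
have [Phi hPhi] := choice pieces.
have disj : disjoint_segments block_index (blk^~ (-2)%Z) (blk^~ 5%Z).
  by apply: blk_disjoint.
have PhiP i : block_index i ->
    [/\ is_aut (Phi i), Phi i (blk i (-2)) = blk i (-2) & Phi i (blk i 5) = blk i 5].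
  by move=> /hPhi[].
exists (piecewise block_index (blk^~ (-2)%Z) (blk^~ 5%Z) Phi); split.
- exact: piecewise_aut.
- apply: (block_supported_in_normal uh two sparse_b normalN pstab_bN (P := block_index)
    (c := blk^~ (-3)%Z) (x := blk^~ (-2)%Z) (y := blk^~ 5%Z) (d := blk^~ 6%Z)).
  + by move=> i Pi; split; apply: blk_lt => //; lia.
  + exact: blk_disjoint.
  + by move=> i Pi z; apply: blk_not_a.
  + exact: piecewise_aut.
  + exact: piecewise_fix.
- move=> i z Pi /andP[z0 z3].
  have zi : blk i (-2) <= z <= blk i 5.
    by rewrite (le_trans _ z0) ?(le_trans z3) ?blk_le.
  by rewrite (piecewise_in Phi disj Pi zi); have [_ _ _ ->] := hPhi i Pi; rewrite ?z0.
- by move=> z gz; apply: piecewise_out => -[i [Pi /(blk_moved Pi)]].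
Qed.

Lemma second_factor_in_normal h hi : is_aut h -> cancel h hi -> cancel hi h ->
  (forall i z, block_index i -> blk i 0 <= z <= blk i 3 -> h z = g z) ->
  (forall z, g z = z -> h z = z) ->
  N (hi \o g).
Proof.
move=> hh hK hiK agree hfix.
apply: (block_supported_in_normal uh two sparse_b normalN pstab_bN (P := block_index)
  (c := blk^~ 2%Z) (x := blk^~ 3%Z) (y := blk^~ 12%Z) (d := blk^~ 13%Z)).
- by move=> i Pi; split; apply: blk_lt => //; lia.
- exact: blk_disjoint.
- by move=> i Pi z; apply: blk_not_a.
- exact: aut_comp (aut_cancel hh hK hiK) hg.
move=> z zout /=; suff <- : h z = g z by rewrite hK.
have [gz|gz] := pselect (g z = z); first by rewrite gz hfix.
have [r [root_r rz]] := moved_orbit_root gz.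
have [n [t [t12 /andP[zlo zhi]]]] :=
  orbit_seq_locate_mod hg gK giK (ltac:(lia) : (0 < 12)%Z) root_r.1 rz.
have Pi : block_index (r, n) by [].
case: (Z.le_gt_cases t 2) => t2.
  apply: (agree (r, n)) => //; rewrite (le_trans _ zlo) ?(le_trans zhi) //.
  - by apply: (blk_le Pi); lia.
  - by apply: (blk_le Pi); lia.
have z3 : blk (r, n) 3 <= z by apply: le_trans zlo; apply: (blk_le Pi); lia.
have z12 : z <= blk (r, n) 12 by apply: le_trans zhi _; apply: (blk_le Pi); lia.
case: (eqVneq z (blk (r, n) 3)) => [->|ne3].
  by apply: (agree (r, n)) => //; rewrite lexx andbT; apply: blk_le => //; lia.
case: (eqVneq z (blk (r, n) 12)) => [->|ne12].
  have -> : blk (r, n) 12 = blk (r, (n + 1)%Z) 0.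
    by rewrite /blk (_ : 12 * (n + 1) + 0 = 12 * n + 12)%Z //; lia.
  by apply: (agree (r, (n + 1)%Z)) => //; rewrite lexx; apply: blk_le => //; lia.
have : blk (r, n) 3 < z < blk (r, n) 12.
  by rewrite !lt_neqAle z3 z12 ne12 eq_sym ne3.
by move/(zout (r, n) Pi).
Qed.

Lemma fixing_aut_in_normal : N g.
Proof.
have [h [hh Nh agree hfix]] := first_factor_in_normal.
have [hi [_ hK hiK]] := aut_inverse hh.
have [_ _ Nmul _ _] := normalN.
have -> : g = h \o (hi \o g) by apply: funext => z /=; rewrite hiK.
exact: Nmul Nh (second_factor_in_normal hh hK hiK agree hfix).
Qed.

End Decomposition.

Theorem mainTheorem15 (disp : Order.disp_t) (X : orderType disp) :
  (exists x y : X, x <> y) ->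
  @ultrahomogeneous disp X ->
  simple_dynamical_ideal (@Aut disp X) (@nowhere_dense_ideal disp X).
Proof.
move=> two uh; have above := exists_above uh two.
have below := exists_below uh two; have between := exists_between uh two.
split; first exact: dynamical_nowhere_dense.
move=> a b _ /(nowhere_denseP above below between) sparse_b _ N normalN pstab_bN.
apply/seteqP; split=> [|g [hg g_a]]; first by case: normalN.
have [gi [_ gK giK]] := aut_inverse hg.
exact: (@fixing_aut_in_normal _ _ uh two a b N sparse_b normalN pstab_bN g gi
  hg gK giK g_a).
Qed.
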